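(* For integers $M,N,m,l$ with $1\leq m\leq l<N$ and $M-m\geq N-l\geq 1$, the polynomial \[ {M\brack m}{N\brack l}-{M\brack m-1}{N\brack l+1} \] has nonnegative coefficients as a polynomial in $q$.
   Context: ${n\brack m}=\prod_{i=0}^{m-1}\frac{1-q^{n-i}}{1-q^{m-i}}$ denotes the Gaussian polynomial ($q$-binomial coefficient) for integers $n\ge m\ge0$. *)

From mathcomp Require Import all_boot all_order all_algebra.
Set Implicit Arguments. Unset Strict Implicit. Unset Printing Implicit Defensive.
Import GRing.Theory Num.Theory.
Local Open Scope ring_scope.

(* Gaussian polynomial [n brack m] = prod_{i<m} (1 - q^(n-i)) / (1 - q^(m-i)),
   computed in {poly rat} as the exact polynomial quotient of the numerator
   product by the denominator product (the division is exact for n >= m >= 0). *)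
Definition gauss_num (n m : nat) : {poly rat} :=
  \prod_(i < m) (1 - 'X^(n - i)).
Definition gauss_den (m : nat) : {poly rat} :=
  \prod_(i < m) (1 - 'X^(m - i)).
Definition gauss (n m : nat) : {poly rat} := gauss_num n m %/ gauss_den m.

From mathcomp Require Import all_boot all_order all_algebra.
From mathcomp Require Import ring zify.
Import GRing.Theory Num.Theory.
Local Open Scope ring_scope.

(* The Gaussian polynomials satisfy the two Pascal rules
   [n+1, k+1] = [n, k] + q^(k+1) [n, k+1] = [n, k+1] + q^(n-k) [n, k].
   Strengthen the claim to: D_e(M, k, N, l) = [M, k+1] [N, l] - q^e [M, k] [N, l+1]
   has nonnegative coefficients whenever k <= l, N + k <= M + l and
   e + N + 2k <= M + 2l (the theorem is e = 0, k = m - 1). By induction on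
   M + N: expanding the two factors with top index M, or the two with top
   index N, by a suitably chosen Pascal rule writes D_e as D_e' + q^j D_e''
   with smaller indices that still satisfy the inequalities; in the base
   cases D_e is a product of Gaussian polynomials or 0. *)

Lemma split_cross_diff (R : comPzRingType) (x a b c d u v : R) (i j e e' : nat) :
  (e + j = i + e')%N ->
  (a + x ^+ i * b) * u - x ^+ e * ((c + x ^+ j * d) * v)
  = (a * u - x ^+ e * (c * v)) + x ^+ i * (b * u - x ^+ e' * (d * v)).
Proof.
move=> he; have hx : x ^+ e * x ^+ j = x ^+ i * x ^+ e' by rewrite -!exprD he.
transitivity ((a * u - x ^+ e * (c * v)) + x ^+ i * (b * u)
              - x ^+ e * x ^+ j * (d * v)); first by ring.
by rewrite hx; ring.
Qed.

Lemma split_cross_diffr (R : comPzRingType) (x a b c d u v : R) (i j e e' : nat) :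
  (e + j = i + e')%N ->
  u * (a + x ^+ i * b) - x ^+ e * (v * (c + x ^+ j * d))
  = (u * a - x ^+ e * (v * c)) + x ^+ i * (u * b - x ^+ e' * (v * d)).
Proof.
by move=> he; rewrite ![u * _]mulrC ![v * _]mulrC; apply: split_cross_diff.
Qed.

Definition nonneg_coefs {R : numDomainType} (p : {poly R}) := forall i, 0 <= p`_i.

Section NonnegCoefs.
Variable R : numDomainType.
Implicit Types p r : {poly R}.

Lemma nonneg_coefs0 : nonneg_coefs (0 : {poly R}).
Proof. by move=> i; rewrite coef0. Qed.

Lemma nonneg_coefs1 : nonneg_coefs (1 : {poly R}).
Proof. by move=> i; rewrite coef1 ler0n. Qed.

Lemma nonneg_coefsD p r : nonneg_coefs p -> nonneg_coefs r -> nonneg_coefs (p + r).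
Proof. by move=> hp hr i; rewrite coefD addr_ge0. Qed.

Lemma nonneg_coefsM p r : nonneg_coefs p -> nonneg_coefs r -> nonneg_coefs (p * r).
Proof. by move=> hp hr i; rewrite coefM sumr_ge0 // => j _; apply: mulr_ge0. Qed.

Lemma nonneg_coefsXnM n p : nonneg_coefs p -> nonneg_coefs ('X^n * p).
Proof. by move=> hp i; rewrite coefXnM; case: ifP. Qed.

Lemma nonneg_coefsDXnM n p r :
  nonneg_coefs p -> nonneg_coefs r -> nonneg_coefs (p + 'X^n * r).
Proof. by move=> hp hr; apply/nonneg_coefsD/nonneg_coefsXnM. Qed.

End NonnegCoefs.

Fixpoint qbin (n k : nat) : {poly rat} :=
  match n, k with
  | _, 0 => 1
  | 0, _.+1 => 0
  | n.+1, k.+1 => qbin n k + 'X^(k.+1) * qbin n k.+1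
  end.

Lemma qbin0 n : qbin n 0 = 1. Proof. by case: n. Qed.

Lemma qbinS n k : qbin n.+1 k.+1 = qbin n k + 'X^(k.+1) * qbin n k.+1.
Proof. by []. Qed.

Lemma qbin_small n k : (n < k)%N -> qbin n k = 0.
Proof.
elim: n k => [|n IHn] [|k] //= ltnk.
by rewrite !IHn ?mulr0 ?addr0 // ltnW.
Qed.

Lemma qbin_nonneg_coefs n k : nonneg_coefs (qbin n k).
Proof.
elim: n k => [|n IHn] [|k].
- exact: nonneg_coefs1.
- exact: nonneg_coefs0.
- exact: nonneg_coefs1.
- by rewrite qbinS; apply: nonneg_coefsDXnM.
Qed.

Lemma gauss_num_small n k : (n < k)%N -> gauss_num n k = 0.
Proof.
move=> ltnk; rewrite /gauss_num (bigD1 (Ordinal ltnk)) //=.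
by rewrite subnn expr0 subrr mul0r.
Qed.

Lemma gauss_num0 n : gauss_num n 0 = 1.
Proof. by rewrite /gauss_num big_ord0. Qed.

Lemma gauss_den0 : gauss_den 0 = 1.
Proof. by rewrite /gauss_den big_ord0. Qed.

Lemma gauss_numS n k : gauss_num n.+1 k.+1 = (1 - 'X^(n.+1)) * gauss_num n k.
Proof. by rewrite /gauss_num big_ord_recl subn0. Qed.

Lemma gauss_numSr n k : gauss_num n k.+1 = gauss_num n k * (1 - 'X^(n - k)).
Proof. by rewrite /gauss_num big_ord_recr. Qed.

Lemma gauss_denS k : gauss_den k.+1 = (1 - 'X^(k.+1)) * gauss_den k.
Proof. by rewrite /gauss_den big_ord_recl subn0. Qed.

Lemma gauss_den_neq0 k : gauss_den k != 0.
Proof.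
have oneBX_neq0 j : (1 - 'X^(j.+1) : {poly rat}) != 0.
  apply/eqP => /(congr1 (horner^~ 0)); rewrite !hornerE expr0n /= subr0.
  by move/eqP; rewrite oner_eq0.
elim: k => [|k IHk]; first by rewrite gauss_den0 oner_eq0.
by rewrite gauss_denS mulf_neq0.
Qed.

Lemma qbin_mul_den n k : qbin n k * gauss_den k = gauss_num n k.
Proof.
elim: n k => [|n IHn] [|k]; rewrite ?qbin0 ?gauss_num0 ?gauss_den0 ?mulr1 //.
  by rewrite qbin_small // mul0r gauss_num_small.
rewrite qbinS gauss_denS gauss_numS mulrDl [qbin n k * _]mulrCA IHn.
rewrite -mulrA -gauss_denS IHn gauss_numSr.
have [lekn|ltnk] := leqP k n; last by rewrite gauss_num_small // !(mul0r, mulr0, add0r).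
have -> : n.+1 = (k.+1 + (n - k))%N by lia.
by rewrite exprD; ring.
Qed.

Lemma gaussE n k : gauss n k = qbin n k.
Proof. by rewrite /gauss -qbin_mul_den mulpK // gauss_den_neq0. Qed.

Lemma qbinSr n k : qbin n.+1 k.+1 = qbin n k.+1 + 'X^(n - k) * qbin n k.
Proof.
suff : qbin n.+1 k.+1 * gauss_den k.+1
       = (qbin n k.+1 + 'X^(n - k) * qbin n k) * gauss_den k.+1.
  exact: (mulIf (gauss_den_neq0 k.+1)) _ _.
rewrite qbin_mul_den [RHS]mulrDl qbin_mul_den gauss_numS gauss_numSr gauss_denS.
rewrite -mulrA [qbin n k * _]mulrCA qbin_mul_den.
have [lekn|ltnk] := leqP k n; last by rewrite gauss_num_small // !(mul0r, mulr0, addr0).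
have -> : n.+1 = (n - k + k.+1)%N by lia.
by rewrite exprD; ring.
Qed.

Definition qbin_cross (e M k N l : nat) : {poly rat} :=
  qbin M k.+1 * qbin N l - 'X^e * (qbin M k * qbin N l.+1).

Lemma qbin_crossSM e M k N l :
  qbin_cross e.+1 M.+1 k.+1 N l
  = qbin_cross e.+1 M k N l + 'X^(k.+2) * qbin_cross e M k.+1 N l.
Proof. by rewrite /qbin_cross !qbinS; apply: split_cross_diff; lia. Qed.

Lemma qbin_crossSM0 e M N l :
  qbin_cross e.+1 M.+1 0 N l = qbin N l + 'X^1 * qbin_cross e M 0 N l.
Proof. by rewrite /qbin_cross qbinS !qbin0 !exprS expr0; ring. Qed.

Lemma qbin_crossSMr e M k N l : (k < M)%N ->
  qbin_cross e M.+1 k.+1 N l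
  = qbin_cross e M k.+1 N l + 'X^(M - k.+1) * qbin_cross e.+1 M k N l.
Proof. by move=> ltkM; rewrite /qbin_cross !qbinSr; apply: split_cross_diff; lia. Qed.

Lemma qbin_crossSMr0 e M N l :
  qbin_cross e M.+1 0 N l = qbin_cross e M 0 N l + 'X^M * qbin N l.
Proof. by rewrite /qbin_cross qbinSr !qbin0 subn0; ring. Qed.

Lemma qbin_crossSN e M k N l :
  qbin_cross e M k N.+1 l.+1
  = qbin_cross e M k N l + 'X^(l.+1) * qbin_cross e.+1 M k N l.+1.
Proof. by rewrite /qbin_cross !qbinS; apply: split_cross_diffr; lia. Qed.

Lemma qbin_crossSNr e M k N l : (l < N)%N ->
  qbin_cross e.+1 M k N.+1 l.+1
  = qbin_cross e.+1 M k N l.+1 + 'X^(N - l) * qbin_cross e M k N l.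
Proof. by move=> ltlN; rewrite /qbin_cross !qbinSr; apply: split_cross_diffr; lia. Qed.

Lemma qbin_cross_nonneg_coefs_small e M k N l : (N <= l)%N ->
  nonneg_coefs (qbin_cross e M k N l).
Proof.
move=> leNl; rewrite /qbin_cross [qbin N l.+1]qbin_small // !mulr0 subr0.
exact/nonneg_coefsM/qbin_nonneg_coefs/qbin_nonneg_coefs.
Qed.

Lemma qbin_cross_nonneg_coefs e M k N l :
  (k <= l)%N -> (N + k <= M + l)%N -> (e + N + 2 * k <= M + 2 * l)%N ->
  nonneg_coefs (qbin_cross e M k N l).
Proof.
have [s] := ubnP (M + N); elim: s e M k N l => // s IH e M k N l hs hkl hNM he.
have [leNl|ltlN] := leqP N l; first exact: qbin_cross_nonneg_coefs_small.
have N_gt0 : (0 < N)%N by lia.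
case: e he => [|e] he.
- have [ltkl|lelk] := ltnP k l.
    have l_gt0 : (0 < l)%N by lia.
    rewrite -(prednK N_gt0) -(prednK l_gt0) qbin_crossSN.
    by apply: nonneg_coefsDXnM; apply: IH; lia.
  have [ltNM|leMN] := ltnP N M; last first.
    have [-> ->] : l = k /\ N = M by lia.
    by rewrite /qbin_cross expr0 mul1r mulrC subrr; apply: nonneg_coefs0.
  have M_gt0 : (0 < M)%N by lia.
  rewrite -(prednK M_gt0); case: k => [|k] in hkl hNM he lelk *.
    rewrite qbin_crossSMr0.
    by apply: nonneg_coefsDXnM; [apply: IH; lia | apply: qbin_nonneg_coefs].
  by rewrite qbin_crossSMr; [apply: nonneg_coefsDXnM; apply: IH | ]; lia.
- have [ltNM|leMN] := ltnP (N + k) (M + l).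
    have M_gt0 : (0 < M)%N by lia.
    rewrite -(prednK M_gt0); case: k => [|k] in hkl hNM he ltNM *.
      rewrite qbin_crossSM0.
      by apply: nonneg_coefsDXnM; [apply: qbin_nonneg_coefs | apply: IH; lia].
    by rewrite qbin_crossSM; apply: nonneg_coefsDXnM; apply: IH; lia.
  have l_gt0 : (0 < l)%N by lia.
  rewrite -(prednK N_gt0) -(prednK l_gt0) qbin_crossSNr; last by lia.
  by apply: nonneg_coefsDXnM; apply: IH; lia.
Qed.

Theorem lemma3p1 (M N m l : nat) :
  (1 <= m)%N -> (m <= l)%N -> (l < N)%N -> (N - l <= M - m)%N ->
  forall k : nat,
    0 <= (gauss M m * gauss N l - gauss M m.-1 * gauss N l.+1)`_k.
Proof.
case: m => [|m] // _ hml hlN hNM.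
have := @qbin_cross_nonneg_coefs 0 M m N l.
by rewrite /qbin_cross expr0 mul1r !gaussE; apply; lia.
Qed.
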